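(* Let $p$ be an odd Ramanujan prime. Write $p=p_n$ and let $q$ be the smallest prime greater than $p/2$. Then all integers $\frac{p+1}{2},\frac{p+3}{2},\dots,\frac{p_{n+1}-1}{2}$ are composite, and the open interval $(p,2q)$ contains a prime.
   Context: $p_k$ denotes the $k$-th prime and $\pi(x)$ the number of primes $\le x$. For $n\ge 1$, the $n$-th Ramanujan prime $R_n$ is the smallest positive integer such that $\pi(x)-\pi(x/2)\ge n$ for all real $x\ge R_n$. A Ramanujan prime is a number of the form $R_n$ (these are primes: $2,11,17,29,41,\dots$). *)

From Stdlib Require Import Reals.
From mathcomp Require Import all_boot.

Set Implicit Arguments.
Unset Strict Implicit.
Unset Printing Implicit Defensive.

(* pi(x) = number of primes k with k <= x, for real x.
   Every such k is < up x (up x > x), so enumerating 0 .. up x - 1 suffices. *)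
Definition primepi (x : R) : nat :=
  count (fun k => prime k && (if Rle_dec (INR k) x then true else false))
        (iota 0 (Z.to_nat (up x))).

Definition is_kth_prime (k p : nat) : Prop := prime p /\ primepi (INR p) = k.

Definition ram_prop (n r : nat) : Prop :=
  forall x : R, Rle (INR r) x -> (primepi (Rdiv x 2) + n <= primepi x)%N.

Definition is_ramanujan_R (n r : nat) : Prop :=
  (0 < r)%N /\ ram_prop n r /\ (forall r', (0 < r')%N -> ram_prop n r' -> (r <= r')%N).

Definition ramanujan_prime (p : nat) : Prop :=
  exists n, (1 <= n)%N /\ is_ramanujan_R n p.

(** Write [p = 2h + 1 = R_k].  Minimality of [R_k] forces the Ramanujan
    inequality at [x = 2h] to fail, so [pi(p) - pi(h) = k] exactly.  For
    [h < m] with [2m < p'] there is no prime in [(p, 2m]], so the Ramanujan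
    inequality at [x = 2m] gives [pi(m) <= pi(2m) - k = pi(p) - k = pi(h)]:
    no prime lies in [(h, (p' - 1)/2]].  As [q] is a prime above [h], this
    forces [p' < 2q], and [p'] is the required prime in [(p, 2q)]. *)

From Stdlib Require Import Reals ZArith Lra.
From mathcomp Require Import all_boot zify.
(* Loading MathComp takes the [%R] key away from [R_scope]. *)
Delimit Scope R_scope with Re.

Definition prime_count (N : nat) : nat := count prime (iota 0 N.+1).

Lemma primepi_floor (x : R) (N : nat) :
  (INR N <= x < INR N + 1)%Re -> primepi x = prime_count N.
Proof.
move=> [lo hi]; rewrite /primepi.
have -> : up x = Z.of_nat N.+1.
  by symmetry; apply: tech_up; rewrite -INR_IZR_INZ S_INR; lra.
rewrite Nat2Z.id; apply: eq_in_count => k; rewrite mem_iota add0n => /andP[_ ltkN].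
case: Rle_dec => [_|not_le] /=; first by rewrite andbT.
have /le_INR : (k <= N)%coq_nat by apply/leP.
lra.
Qed.

Lemma primepi_INR (N : nat) : primepi (INR N) = prime_count N.
Proof. by apply: primepi_floor; lra. Qed.

Lemma INR_double (m : nat) : INR (2 * m) = (2 * INR m)%Re.
Proof. by rewrite mult_INR. Qed.

Lemma INR_double_add1 (m : nat) : INR (2 * m + 1) = (2 * INR m + 1)%Re.
Proof. by rewrite -INR_double -S_INR addn1. Qed.

Lemma prime_countS (N : nat) : prime_count N.+1 = prime_count N + prime N.+1.
Proof. by rewrite /prime_count -addn1 iotaD count_cat /= !addn0. Qed.

Lemma leq_prime_count : {homo prime_count : a b / (a <= b)%N}.
Proof.
move=> a b /subnK <-; elim: (b - a) => [|d IH] //.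
by rewrite addSn prime_countS (leq_trans IH) ?leq_addr.
Qed.

Lemma prime_count_prime (m : nat) :
  prime m -> prime_count m = (prime_count m.-1).+1.
Proof. by case: m => [|m] // pm; rewrite prime_countS pm addn1. Qed.

Lemma prime_count_ltn (a m : nat) :
  prime m -> (a < m)%N -> (prime_count a < prime_count m)%N.
Proof.
move=> pm ltam; rewrite (prime_count_prime m pm) ltnS leq_prime_count //.
by rewrite -ltnS prednK ?prime_gt0.
Qed.

Lemma kth_prime_next (n p p' : nat) :
  is_kth_prime n p -> is_kth_prime n.+1 p' ->
  (p < p')%N /\ prime_count p'.-1 = prime_count p.
Proof.
rewrite /is_kth_prime !primepi_INR => -[_ cp] [pp' cp'].
split; last by move: cp'; rewrite prime_count_prime // cp => -[].
by rewrite ltnNge; apply/negP => /leq_prime_count; rewrite cp cp' ltnn.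
Qed.

Lemma ram_prop_double (n r m : nat) :
  ram_prop n r -> (r <= 2 * m)%N -> (prime_count m + n <= prime_count (2 * m))%N.
Proof.
move=> ram lerm; have := ram (INR (2 * m)) (le_INR _ _ (elimT leP lerm)).
have -> : (INR (2 * m) / 2 = INR m)%Re by rewrite INR_double; field.
by rewrite !primepi_INR.
Qed.

Lemma ram_prop_even (n h : nat) :
  ram_prop n (2 * h + 1) -> (prime_count h + n <= prime_count (2 * h))%N ->
  ram_prop n (2 * h).
Proof.
move=> ram le_even x lex.
have [ltx|] := Rlt_or_le x (INR (2 * h + 1)); last exact: ram.
move: lex ltx; rewrite INR_double_add1 INR_double => lex ltx.
rewrite (@primepi_floor x (2 * h)) ?INR_double; last lra.
by rewrite (@primepi_floor _ h) //; lra.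
Qed.

(* By minimality the Ramanujan inequality fails at some [x] in [[2h, 2h + 1)],
   where [pi(x) = pi(2h)] and [pi(x/2) = pi(h)]. *)
Lemma ramanujan_odd_prime_count (n h : nat) :
  (0 < h)%N -> prime (2 * h + 1) -> is_ramanujan_R n (2 * h + 1) ->
  prime_count (2 * h + 1) = prime_count h + n.
Proof.
move=> h_gt0 pp [_ [ram minimal]]; apply/eqP; rewrite eqn_leq; apply/andP; split.
- rewrite prime_count_prime // addn1 /= ltnNge; apply/negP => le_even.
  have := minimal _ _ (ram_prop_even _ _ ram le_even); lia.
- have := ram (INR (2 * h + 1)) (Rle_refl _).
  rewrite primepi_INR (@primepi_floor _ h) // INR_double_add1; lra.
Qed.

Lemma ramanujan_no_prime_in_half_gap (n h p' m : nat) :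
  ram_prop n (2 * h + 1) -> prime_count (2 * h + 1) = prime_count h + n ->
  prime_count p'.-1 = prime_count (2 * h + 1) ->
  (h < m)%N -> (2 * m <= p'.-1)%N -> ~~ prime m.
Proof.
move=> ram count_p count_p' ltmh le2m; apply/negP => pm.
have := ram_prop_double _ _ m ram (_ : 2 * h + 1 <= 2 * m)%N.
have := leq_prime_count _ _ le2m; have := prime_count_ltn _ _ pm ltmh; lia.
Qed.

Theorem lemma2 (p n p' q : nat) :
  ramanujan_prime p -> odd p ->
  is_kth_prime n p -> is_kth_prime n.+1 p' ->
  (* q is the smallest prime greater than p/2 *)
  prime q -> (p < 2 * q)%N -> (forall r, prime r -> (p < 2 * r)%N -> (q <= r)%N) ->
  (forall m, (p.+1./2 <= m <= p'.-1./2)%N -> (1 < m)%N /\ ~~ prime m) /\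
  (exists r, prime r /\ (p < r)%N /\ (r < 2 * q)%N).
Proof.
move=> [k [_ ramR]] odd_p kth kth' pq ltpq _.
have [ltpp' count_p'] := kth_prime_next _ _ _ kth kth'.
have [pp _] := kth; have [pp' _] := kth'.
set h := p./2.
have p_eq : p = 2 * h + 1 by have := odd_double_half p; rewrite odd_p -muln2; lia.
have uphalf_p : p.+1./2 = h.+1 by rewrite /= uphalf_half odd_p.
have h_gt0 : (0 < h)%N by have := prime_gt1 pp; lia.
have [_ [ram _]] := ramR.
rewrite p_eq in pp ramR ram count_p'.
have count_p := ramanujan_odd_prime_count _ _ h_gt0 pp ramR.
have composite m : (h < m)%N -> (2 * m <= p'.-1)%N -> ~~ prime m :=
  ramanujan_no_prime_in_half_gap _ _ _ m ram count_p count_p'.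
have half_p' := odd_double_half p'.-1; rewrite -muln2 in half_p'.
split=> [m /andP[lem lem']|].
  by split; [lia | apply: composite; lia].
exists p'; split=> //; split=> //; rewrite ltnNge; apply/negP => le2q.
have odd_p' : odd p' by case: (even_prime pp') => // p'2; lia.
have ne2q : 2 * q != p' by apply: contraTneq odd_p' => <-; rewrite oddM.
have lthq : (h < q)%N by lia.
have : ~~ (2 * q <= p'.-1)%N by apply: contraL pq; apply: composite lthq.
lia.
Qed.
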